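(* There is an absolute constant $C_2>0$ such that for all $0<u,\tau<1$ the following holds. Let $X,Y$ be finite sets, $Z\subset X\times Y$, and let $\mathsf P_X,\mathsf P_Y$ be partitions of $X$ and $Y$. Let $$E=\Big\{(p_x,p_y)\in\mathsf P_X\times\mathsf P_Y\,:\,\big\|Z-\mathbb P(Z\,:\,p_x\times p_y)\big\|_{\Box^{x,y}(p_x\times p_y)}\ge u\Big\},$$ and suppose $\mathbb P\big(\bigcup_{(p_x,p_y)\in E}p_x\times p_y\,:\,X\times Y\big)\ge\tau$. Then there are partitions $\mathsf P'_X$ of $X$ and $\mathsf P'_Y$ of $Y$ such that (i) $\mathsf P'_X\times\mathsf P'_Y$ refines $\mathsf P_X\times\mathsf P_Y$ and $\mathbb E\big[\mathbb E(Z:\mathsf P'_X\times\mathsf P'_Y)^2\big]\ge\mathbb E\big[\mathbb E(Z:\mathsf P_X\times\mathsf P_Y)^2\big]+\tau u^{C_2}$; (ii) $\operatorname{multi}(\mathsf P'_X:\mathsf P_X)\le 2^{\#\mathsf P_Y}$ and $\operatorname{multi}(\mathsf P'_Y:\mathsf P_Y)\le 2^{\#\mathsf P_X}$.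
   Context: Sets are identified with indicator functions; $X\times Y$ carries the uniform probability measure, and $\mathbb P(Z:p_x\times p_y)=|Z\cap(p_x\times p_y)|/(|p_x||p_y|)$. For finite sets $P,Q$ and $f:P\times Q\to\mathbb R$, $\|f\|_{\Box^{x,y}(P\times Q)}^4=\mathbb E_{x,x'\in P,\,y,y'\in Q}f(x,y)f(x,y')f(x',y)f(x',y')$; here $Z$ is restricted to $p_x\times p_y$. For a partition $\mathsf P$ of $X\times Y$, $\mathbb E(Z:\mathsf P)=\sum_{p\in\mathsf P}\mathbf 1_p\,|Z\cap p|/|p|$, and $\mathsf P'_X\times\mathsf P'_Y=\{a\times b:a\in\mathsf P'_X,b\in\mathsf P'_Y\}$. A partition $\mathsf P'$ refines $\mathsf P$ if every atom of $\mathsf P$ is a union of atoms of $\mathsf P'$. For a partition $\mathsf P'$ subordinate to $\mathsf P$ (every atom of $\mathsf P'$ lies in an atom of $\mathsf P$), $\operatorname{multi}(\mathsf P':\mathsf P)=\max_{p\in\mathsf P}\#\{p'\in\mathsf P':p'\subset p\}$. *)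

From HB Require Import structures.
From mathcomp Require Import all_boot all_order all_algebra.
From mathcomp Require Import reals exp Rstruct.
Set Implicit Arguments. Unset Strict Implicit. Unset Printing Implicit Defensive.
Import Order.TTheory GRing.Theory Num.Theory.
Local Open Scope ring_scope.

Section Defs.
Variable R : realType.
Implicit Types dummy : R.

Definition dens (X Y : finType) (Z : {set X * Y}) (A : {set X}) (B : {set Y}) : R :=
  #|Z :&: setX A B|%:R / (#|A|%:R * #|B|%:R).

Definition boxnorm4 (X Y : finType) (f : X -> Y -> R) (A : {set X}) (B : {set Y}) : R :=
  (#|A|%:R ^+ 2 * #|B|%:R ^+ 2)^-1 *
  \sum_(x in A) \sum_(x' in A) \sum_(y in B) \sum_(y' in B)
     f x y * f x y' * f x' y * f x' y'.

Definition boxnorm (X Y : finType) (f : X -> Y -> R) (A : {set X}) (B : {set Y}) : R :=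
  powR (boxnorm4 f A B) (4%:R^-1).

(* Z - P(Z : A x B), as a function (restricted to A x B in boxnorm) *)
Definition balanced (X Y : finType) (Z : {set X * Y}) (A : {set X}) (B : {set Y}) :
  X -> Y -> R := fun x y => ((x, y) \in Z)%:R - dens Z A B.

Definition condexp (T : finType) (Z : {set T}) (P : {set {set T}}) (z : T) : R :=
  \sum_(p in P) (z \in p)%:R * (#|Z :&: p|%:R / #|p|%:R).

Definition energy (T : finType) (Z : {set T}) (P : {set {set T}}) : R :=
  #|T|%:R^-1 * \sum_(z : T) condexp Z P z ^+ 2.

End Defs.

Definition prodpart (X Y : finType) (PX : {set {set X}}) (PY : {set {set Y}})
  : {set {set X * Y}} := [set setX a b | a in PX, b in PY].

Definition refines (T : finType) (P' P : {set {set T}}) : Prop :=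
  forall p, p \in P -> exists S : {set {set T}}, S \subset P' /\ p = cover S.

Definition multi (T : finType) (P' P : {set {set T}}) : nat :=
  \max_(p in P) #|[set p' in P' | p' \subset p]|.

Definition Eset (R : realType) (X Y : finType) (Z : {set X * Y})
  (PX : {set {set X}}) (PY : {set {set Y}}) (u : R) : {set {set X} * {set Y}} :=
  [set pq in setX PX PY | u <= boxnorm (balanced R Z pq.1 pq.2) pq.1 pq.2].

From HB Require Import structures.
From mathcomp Require Import all_boot all_order all_algebra.
From mathcomp Require Import reals exp Rstruct.
From mathcomp Require Import lra ring.
Import Order.TTheory GRing.Theory Num.Theory.
Local Open Scope ring_scope.

Set Implicit Arguments. Unset Strict Implicit. Unset Printing Implicit Defensive.

(* Writing the fourth power of the box norm as the sum of f(x', y') times the "slice"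
   sum_(x, y) f(x, y) f(x, y') f(x', y) and using |f| <= 1 gives a point (x', y') whose slice
   has size at least u^4 |a||b|.  The slice expands into the discrepancies of S x T, S x b and
   a x T, where S and T are the Z-neighbourhoods of y' and x', so one of these rectangles has
   discrepancy at least u^4 |a||b| / 3.  Refining each atom a of P_X by the sets S chosen for
   the cells a x b, b in P_Y (and symmetrically for P_Y), an atom splits into at most 2^#P_Y
   pieces and every chosen rectangle becomes a union of new cells.  By Cauchy-Schwarz on that
   rectangle the new conditional expectation gains at least (u^4/3)^2 |a||b| >= u^24 |a||b| in
   squared L2 norm on the cell, and by Pythagoras these gains add up to tau u^24. *)

Section FiniteSums.
Variable R : realType.

Lemma sum_indicator (I : finType) (A : {pred I}) (p : pred I) :
  \sum_(i in A) ((p i)%:R : R) = #|[set i in A | p i]|%:R.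
Proof.
rewrite -sum1_card natr_sum big_mkcond /= [RHS]big_mkcond /=.
by apply: eq_bigr => i _; rewrite inE; case: (i \in A); case: (p i).
Qed.

Lemma ler_sum_subset (I : finType) (A B : {set I}) (h : I -> R) :
  A \subset B -> (forall i, 0 <= h i) -> \sum_(i in A) h i <= \sum_(i in B) h i.
Proof.
move=> AB h_ge0; rewrite big_mkcond [leRHS]big_mkcond /=; apply: ler_sum => z _.
by case: ifP => [/(subsetP AB)->//|_]; case: ifP.
Qed.

Lemma sum_indicator_sub (I : finType) (A S : {set I}) (c : R) (g : I -> R) :
  S \subset A ->
  \sum_(i in A) ((i \in S)%:R - c) * g i = \sum_(i in S) g i - c * \sum_(i in A) g i.
Proof.
move=> SA; under eq_bigr do rewrite mulrBl.
rewrite sumrB -mulr_sumr; congr (_ - _).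
rewrite (big_setID S) /= (setIidPr SA) [X in _ + X]big1 ?addr0 => [|i]; last first.
  by rewrite !inE => /andP[/negbTE-> _]; rewrite mul0r.
by apply: eq_bigr => i iS; rewrite iS mul1r.
Qed.

Lemma sqr_sum_le_card (I : finType) (A : {pred I}) (h : I -> R) :
  (\sum_(i in A) h i) ^+ 2 <= #|A|%:R * \sum_(i in A) h i ^+ 2.
Proof.
have : 0 <= \sum_(i in A) \sum_(j in A) (h i - h j) ^+ 2.
  by apply: sumr_ge0 => i _; apply: sumr_ge0 => j _; apply: sqr_ge0.
have -> : \sum_(i in A) \sum_(j in A) (h i - h j) ^+ 2 =
    \sum_(i in A) \sum_(j in A) (h i ^+ 2 + h j ^+ 2) - 2 * (\sum_(i in A) h i) ^+ 2.
  rewrite [in RHS]expr2 big_distrlr /= mulr_sumr -sumrB; apply: eq_bigr => i _.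
  by rewrite mulr_sumr -sumrB; apply: eq_bigr => j _; ring.
under eq_bigr do rewrite big_split /= sumr_const.
rewrite big_split /= sumr_const sumrMnl -mulr_natl -[_ *+ #|A|]mulr_natl; lra.
Qed.

Lemma sum_const_rect (X Y : finType) (S : {set X}) (T : {set Y}) (c : R) :
  \sum_(x in S) \sum_(y in T) c = c * (#|S|%:R * #|T|%:R).
Proof.
under eq_bigr do rewrite sumr_const.
by rewrite sumr_const -mulrnA -natrM mulr_natr mulnC.
Qed.

End FiniteSums.

Section Saturation.
Variable T : finType.
Implicit Types (W : {set T}) (P Q : {set {set T}}).

Definition saturated P W :=
  forall q, q \in P -> forall z w, z \in q -> w \in q -> z \in W -> w \in W.

Lemma saturated_subset P W q z :
  saturated P W -> q \in P -> z \in q -> z \in W -> q \subset W.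
Proof. by move=> sW qP zq zW; apply/subsetP => w wq; apply: sW qP z w zq wq zW. Qed.

Lemma saturated_refines P Q :
  partition Q [set: T] -> {in P, forall p, saturated Q p} -> refines Q P.
Proof.
case/and3P=> /eqP coverQ tiQ _ satQ p pP.
exists [set q in Q | q \subset p]; split; first by apply/subsetP => q; rewrite inE => /andP[].
apply/setP => z; apply/idP/bigcupP => [zp | [q]]; last by rewrite inE => /andP[_ /subsetP]; apply.
have zQ : z \in cover Q by rewrite coverQ.
exists (pblock Q z); rewrite ?mem_pblock // inE pblock_mem //=.
by apply: saturated_subset (satQ p pP) _ _ zp; rewrite ?pblock_mem ?mem_pblock.
Qed.

End Saturation.

Lemma saturated_setX (X Y : finType) (PX : {set {set X}}) (PY : {set {set Y}})
    (A : {set X}) (B : {set Y}) :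
  saturated PX A -> saturated PY B -> saturated (prodpart PX PY) (setX A B).
Proof.
move=> satA satB _ /imset2P[a b aP bP ->] z w; rewrite !inE.
case/andP=> za zb /andP[wa wb] /andP[zA zB].
by rewrite (satA a aP _ _ za wa zA) (satB b bP _ _ zb wb zB).
Qed.

Section ProductPartition.
Variables (X Y : finType) (PX : {set {set X}}) (PY : {set {set Y}}).
Hypotheses (pX : partition PX [set: X]) (pY : partition PY [set: Y]).

Lemma partition_prodpart : partition (prodpart PX PY) [set: X * Y].
Proof.
have [/eqP coverX tiX PX0] := and3P pX; have [/eqP coverY tiY PY0] := and3P pY.
have inP z : z \in setX (pblock PX z.1) (pblock PY z.2).
  by rewrite inE !mem_pblock coverX coverY !inE.
apply/and3P; split.
- apply/eqP/setP => z; rewrite inE; apply/bigcupP.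
  exists (setX (pblock PX z.1) (pblock PY z.2)) => //.
  by apply: imset2_f; rewrite pblock_mem // ?coverX ?coverY.
- apply/trivIsetP => _ _ /imset2P[a b aP bP ->] /imset2P[a' b' a'P b'P ->].
  apply: contraR; rewrite -setI_eq0 => /set0Pn[[x y]]; rewrite !inE.
  case/andP=> /andP[xa yb] /andP[xa' yb'].
  rewrite -(def_pblock tiX aP xa) -(def_pblock tiY bP yb).
  by rewrite (def_pblock tiX a'P xa') (def_pblock tiY b'P yb').
- apply/imset2P => -[a b aP bP /esym/setP ab0].
  have /set0Pn[x xa] : a != set0 by apply: contraNneq PX0 => <-.
  have /set0Pn[y yb] : b != set0 by apply: contraNneq PY0 => <-.
  by have := ab0 (x, y); rewrite !inE xa yb.
Qed.

End ProductPartition.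

Section ConditionalExpectation.
Variables (R : realType) (T : finType).
Implicit Types (Z W q : {set T}) (P Q : {set {set T}}).

Lemma sum_saturated P W (g : T -> R) : partition P [set: T] -> saturated P W ->
  \sum_(z in W) g z = \sum_(q in P | q \subset W) \sum_(z in q) g z.
Proof.
move=> pP sW.
rewrite (eq_bigl (fun z => (z \in [set: T]) && (z \in W))) => [|z]; last by rewrite inE.
rewrite (set_partition_big_cond _ pP) [RHS]big_mkcondr /=; apply: eq_bigr => q qP.
have [qW|qNW] := boolP (q \subset W).
  by apply: eq_bigl => z; apply/andb_idr => /(subsetP qW).
rewrite big_pred0 // => z; apply/negbTE/andP => -[zq zW].
by case/negP: qNW; apply: saturated_subset sW qP zq zW.
Qed.

Lemma card_mul_density Z q : (#|q|%:R : R) * (#|Z :&: q|%:R / #|q|%:R) = #|Z :&: q|%:R.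
Proof.
have [q0|q_gt0] := posnP #|q|; last by rewrite mulrCA divff ?mulr1 ?pnatr_eq0 -?lt0n.
suff -> : #|Z :&: q| = 0%N by rewrite q0 mul0r.
by apply/eqP; rewrite -leqn0 -q0 subset_leq_card ?subsetIr.
Qed.

Section Partition.
Variables (Z : {set T}) (P : {set {set T}}).
Hypothesis pP : partition P [set: T].
Local Notation E := (condexp R Z P).

Lemma condexp_block q z : q \in P -> z \in q -> E z = #|Z :&: q|%:R / #|q|%:R.
Proof.
have [_ tiP _] := and3P pP => qP zq; rewrite /condexp (bigD1 q) //= zq mul1r big1 ?addr0 //.
move=> q' /andP[q'P q'q]; have [zq'|] := boolP (z \in q'); last by rewrite mul0r.
by rewrite -(def_pblock tiP q'P zq') (def_pblock tiP qP zq) eqxx in q'q.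
Qed.

Lemma sum_condexp_block q : q \in P -> \sum_(z in q) E z = #|Z :&: q|%:R.
Proof.
move=> qP; rewrite (eq_bigr _ (fun z => condexp_block qP)) sumr_const -[_ *+ _]mulr_natl.
exact: card_mul_density.
Qed.

Lemma sum_condexp_saturated W : saturated P W -> \sum_(z in W) E z = #|Z :&: W|%:R.
Proof.
move=> sW; have -> : (#|Z :&: W|%:R : R) = \sum_(z in W) ((z \in Z)%:R : R).
  by rewrite sum_indicator; congr _%:R; apply: eq_card => z; rewrite !inE andbC.
rewrite !(sum_saturated _ pP sW); apply: eq_bigr => q /andP[qP _].
rewrite sum_condexp_block // sum_indicator; congr _%:R.
by apply: eq_card => z; rewrite !inE andbC.
Qed.

Lemma sum_condexp_mul (g : T -> R) :
  \sum_z E z * g z = \sum_(q in P) #|Z :&: q|%:R / #|q|%:R * \sum_(z in q) g z.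
Proof.
rewrite (eq_bigl [in [set: T]]) => [|z]; last by rewrite inE.
rewrite (set_partition_big _ pP); apply: eq_bigr => q qP.
by rewrite big_distrr; apply: eq_bigr => z zq; rewrite (condexp_block qP zq).
Qed.

End Partition.

Section Refinement.
Variables (Z : {set T}) (P Q : {set {set T}}).
Hypotheses (pP : partition P [set: T]) (pQ : partition Q [set: T]).
Hypothesis satQ : {in P, forall q, saturated Q q}.
Local Notation EP := (condexp R Z P).
Local Notation EQ := (condexp R Z Q).

Lemma energy_refine :
  energy R Z Q - energy R Z P = #|T|%:R^-1 * \sum_z (EQ z - EP z) ^+ 2.
Proof.
have cross : \sum_z EP z * EQ z = \sum_z EP z ^+ 2.
  under [RHS]eq_bigr do rewrite expr2.
  rewrite !sum_condexp_mul //; apply: eq_bigr => q qP.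
  by rewrite (sum_condexp_saturated Z pQ (satQ qP)) sum_condexp_block.
have -> : \sum_z (EQ z - EP z) ^+ 2 =
    \sum_z EQ z ^+ 2 - 2 * \sum_z EP z * EQ z + \sum_z EP z ^+ 2.
  by rewrite mulr_sumr -sumrB -big_split /=; apply: eq_bigr => z _; ring.
rewrite cross /energy; ring.
Qed.

Lemma discrepancy_sqr_le q W : q \in P -> W \subset q -> saturated Q W ->
  (#|Z :&: W|%:R - #|W|%:R * (#|Z :&: q|%:R / #|q|%:R)) ^+ 2 <=
  #|q|%:R * \sum_(z in q) (EQ z - EP z) ^+ 2.
Proof.
move=> qP Wq sW.
have -> : #|Z :&: W|%:R - #|W|%:R * (#|Z :&: q|%:R / #|q|%:R) =
    \sum_(z in W) (EQ z - EP z).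
  rewrite sumrB sum_condexp_saturated //; congr (_ - _).
  rewrite (eq_bigr _ (fun z zW => condexp_block Z pP qP (subsetP Wq z zW))).
  by rewrite sumr_const mulr_natl.
apply: le_trans (sqr_sum_le_card _ _) _; apply: ler_pM.
- exact: ler0n.
- by apply: sumr_ge0 => z _; apply: sqr_ge0.
- by rewrite ler_nat subset_leq_card.
- by apply: ler_sum_subset => // z; apply: sqr_ge0.
Qed.

Lemma energy_increment (F : {set {set T}}) (w tau : R) :
  F \subset P -> 0 <= w ->
  (forall q, q \in F -> w * #|q|%:R <= \sum_(z in q) (EQ z - EP z) ^+ 2) ->
  tau <= #|cover F|%:R / #|T|%:R ->
  energy R Z P + tau * w <= energy R Z Q.
Proof.
move=> FP w_ge0 gain tau_le; rewrite -lerBrDl energy_refine.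
have cover_le : w * #|cover F|%:R <= \sum_z (EQ z - EP z) ^+ 2.
  rewrite (eq_bigl [in [set: T]]) => [|z]; last by rewrite inE.
  rewrite (set_partition_big _ pP) /=.
  apply: le_trans _ (ler_sum_subset FP _); last by move=> q; apply: sumr_ge0 => z _; apply: sqr_ge0.
  apply: le_trans _ (ler_sum _ gain); rewrite -mulr_sumr ler_wpM2l // -natr_sum ler_nat.
  exact: (leq_card_cover F).1.
rewrite mulrC; apply: le_trans (ler_wpM2l w_ge0 tau_le) _.
rewrite mulrA mulrC; apply: ler_wpM2l cover_le.
by rewrite invr_ge0 ler0n.
Qed.

End Refinement.

End ConditionalExpectation.

Section SplitPartition.
Variables (T K : finType) (P : {set {set T}}) (I : {set K}) (F : {set T} -> K -> {set T}).
Hypothesis pP : partition P [set: T].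

Definition signature (x : T) := (pblock P x, [set k in I | x \in F (pblock P x) k]).
Definition split_partition := preim_partition signature [set: T].

Lemma split_partitionP : partition split_partition [set: T].
Proof. exact: preim_partitionP. Qed.

Lemma split_partition_block q x :
  q \in split_partition -> x \in q -> q = [set y | signature y == signature x].
Proof.
case/imsetP=> x0 _ ->; rewrite !inE => /eqP sx.
by apply/setP => y; rewrite !inE sx eq_sym.
Qed.

Lemma saturated_split (W : {set T}) :
  (forall x y, signature x = signature y -> x \in W -> y \in W) ->
  saturated split_partition W.
Proof.
move=> hW q qS x y xq; rewrite (split_partition_block qS xq) inE => /eqP syx.
exact: hW.
Qed.

Lemma saturated_split_block a : a \in P -> saturated split_partition a.
Proof.
have [/eqP coverP tiP _] := and3P pP => aP; apply: saturated_split => x y /(congr1 fst) /= sxy xa.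
by rewrite -(def_pblock tiP aP xa) sxy mem_pblock coverP inE.
Qed.

Lemma saturated_split_piece a k :
  a \in P -> k \in I -> F a k \subset a -> saturated split_partition (F a k).
Proof.
have [_ tiP _] := and3P pP => aP kI Fa; apply: saturated_split => x y sxy xF.
have pbx : pblock P x = a by rewrite (def_pblock tiP aP (subsetP Fa x xF)).
have : k \in (signature x).2 by rewrite inE kI pbx xF.
have pby : pblock P y = a by rewrite -pbx; exact: (esym (congr1 fst sxy)).
by rewrite sxy inE pby => /andP[].
Qed.

Lemma multi_split_partition : (multi split_partition P <= 2 ^ #|I|)%N.
Proof.
have [_ tiP _] := and3P pP; have [_ _ S0] := and3P split_partitionP.
apply/bigmax_leqP => p pinP /=.
pose block (s : {set K}) := [set y | signature y == (p, s)].
rewrite -card_powerset; apply: leq_trans (leq_imset_card block _).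
apply/subset_leq_card/subsetP => q; rewrite inE => /andP[qS qp].
have /set0Pn[x xq] : q != set0 by apply: contraNneq S0 => <-.
apply/imsetP; exists (signature x).2.
  by rewrite powersetE; apply/subsetP => k; rewrite inE => /andP[].
rewrite (split_partition_block qS xq) /block /signature.
by rewrite (def_pblock tiP pinP (subsetP qp x xq)).
Qed.

End SplitPartition.

Definition discrepancy (R : realType) (X Y : finType) (Z : {set X * Y})
    (A : {set X}) (B : {set Y}) (S : {set X}) (T : {set Y}) : R :=
  #|Z :&: setX S T|%:R - dens R Z A B * (#|S|%:R * #|T|%:R).

Section BoxNorm.
Variables (R : realType) (X Y : finType) (A : {set X}) (B : {set Y}).
Local Notation nAB := (#|A|%:R * #|B|%:R : R).

Definition box_sum (f : X -> Y -> R) :=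
  \sum_(x in A) \sum_(x' in A) \sum_(y in B) \sum_(y' in B) f x y * f x y' * f x' y * f x' y'.

Lemma box_sum_ge0 (f : X -> Y -> R) : 0 <= box_sum f.
Proof.
apply: sumr_ge0 => x _; apply: sumr_ge0 => x' _.
have -> : \sum_(y in B) \sum_(y' in B) f x y * f x y' * f x' y * f x' y' =
    (\sum_(y in B) f x y * f x' y) ^+ 2.
  by rewrite expr2 big_distrlr /=; apply: eq_bigr => y _; apply: eq_bigr => y' _; ring.
exact: sqr_ge0.
Qed.

Lemma boxnorm4_ge0 (f : X -> Y -> R) : 0 <= boxnorm4 f A B.
Proof. by rewrite /boxnorm4 mulr_ge0 ?box_sum_ge0 // invr_ge0 mulr_ge0 ?exprn_ge0. Qed.

Lemma boxnormX4 (f : X -> Y -> R) : boxnorm f A B ^+ 4 = boxnorm4 f A B.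
Proof.
rewrite /boxnorm -powR_mulrn ?powR_ge0 // -powRrM mulVf ?pnatr_eq0 //.
by rewrite powRr1 ?boxnorm4_ge0.
Qed.

Lemma box_sum_ge_boxnorm (f : X -> Y -> R) (u : R) : 0 < u -> u <= boxnorm f A B ->
  [/\ (0 < #|A|)%N, (0 < #|B|)%N & u ^+ 4 * nAB ^+ 2 <= box_sum f].
Proof.
move=> u_gt0 u_le; have u4 : u ^+ 4 <= boxnorm4 f A B.
  by rewrite -boxnormX4 ler_pXn2r // nnegrE ?powR_ge0 // ltW.
have [A_gt0 B_gt0] : (0 < #|A|)%N /\ (0 < #|B|)%N.
  apply/andP; rewrite -muln_gt0 lt0n; apply: contraTneq u4 => AB0.
  by rewrite -ltNge /boxnorm4 -exprMn -natrM AB0 mulr0n expr0n invr0 mul0r exprn_gt0.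
split=> //; rewrite -ler_pdivlMr ?exprn_gt0 ?mulr_gt0 ?ltr0n // mulrC.
by apply: le_trans u4 _; rewrite /boxnorm4 exprMn.
Qed.

Lemma exists_large_term (f g : X -> Y -> R) (c : R) :
  (0 < #|A|)%N -> (0 < #|B|)%N -> (forall x y, `|f x y| <= 1) ->
  c * nAB <= \sum_(x in A) \sum_(y in B) f x y * g x y ->
  exists x y, [/\ x \in A, y \in B & c <= `|g x y|].
Proof.
move=> /card_gt0P[a aA] /card_gt0P[b bB] f_le1 c_le.
have [/existsP[x /existsP[y /and3P[xA yB]]]|/existsPn small] :=
  boolP [exists x, exists y, [&& x \in A, y \in B & c <= `|g x y|]]; first by exists x, y.
have {}small x y : x \in A -> y \in B -> `|g x y| < c.
  by move=> xA yB; move/existsPn/(_ y): (small x); rewrite xA yB /= -ltNge.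
suff : \sum_(x in A) \sum_(y in B) f x y * g x y < c * nAB by rewrite ltNge c_le.
rewrite -sum_const_rect; apply: le_lt_trans (ler_norm _) _.
apply: le_lt_trans (ler_norm_sum _ _ _) _.
apply: ltr_sum; first by apply/hasP; exists a; rewrite ?mem_index_enum.
move=> x xA; apply: le_lt_trans (ler_norm_sum _ _ _) _.
apply: ltr_sum; first by apply/hasP; exists b; rewrite ?mem_index_enum.
move=> y yB; rewrite normrM; apply: le_lt_trans (small x y xA yB).
by rewrite -[leRHS]mul1r ler_wpM2r.
Qed.

End BoxNorm.

Section Balanced.
Variables (R : realType) (X Y : finType) (Z : {set X * Y}) (A : {set X}) (B : {set Y}).
Local Notation d := (dens R Z A B).
Local Notation f := (balanced R Z A B).
Local Notation D := (discrepancy R Z A B).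
Local Notation nAB := (#|A|%:R * #|B|%:R : R).

Lemma sum_rect_indicator (S : {set X}) (T : {set Y}) :
  \sum_(x in S) \sum_(y in T) (((x, y) \in Z)%:R : R) = #|Z :&: setX S T|%:R.
Proof.
rewrite pair_big /= sum_indicator; congr _%:R.
by apply: eq_card => -[x y]; rewrite !inE andbC.
Qed.

Lemma sum_balanced (S : {set X}) (T : {set Y}) :
  \sum_(x in S) \sum_(y in T) f x y = D S T.
Proof.
under eq_bigr do rewrite sumrB.
by rewrite sumrB sum_rect_indicator sum_const_rect.
Qed.

Lemma discrepancy_full : D A B = 0.
Proof.
by rewrite /discrepancy /dens -natrM -cardsX mulrC card_mul_density subrr.
Qed.

Lemma dens_ge0_le1 : 0 <= d <= 1.
Proof.
rewrite /dens -natrM -cardsX; have [->|AB_gt0] := posnP #|setX A B|.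
  by rewrite invr0 mulr0 lexx ler01.
rewrite divr_ge0 ?ler0n //= ler_pdivrMr ?ltr0n // mul1r ler_nat.
by rewrite subset_leq_card ?subsetIr.
Qed.

Lemma norm_balanced x y : `|f x y| = ((x, y) \in Z)%:R + d - 2 * ((x, y) \in Z)%:R * d.
Proof.
have /andP[d_ge0 d_le1] := dens_ge0_le1; rewrite /balanced.
case: ((x, y) \in Z); rewrite /= ?mulr1n ?mulr0n.
  by rewrite ger0_norm; lra.
by rewrite ler0_norm; lra.
Qed.

Lemma norm_balanced_le1 x y : `|f x y| <= 1.
Proof.
have /andP[? ?] := dens_ge0_le1; rewrite norm_balanced.
by case: ((x, y) \in Z); rewrite /= ?mulr1n ?mulr0n; lra.
Qed.

Lemma sum_norm_balanced : \sum_(x in A) \sum_(y in B) `|f x y| <= nAB / 2.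
Proof.
(* The sum equals 2 d (1 - d) |A||B|. *)
have -> : \sum_(x in A) \sum_(y in B) `|f x y| =
    (1 - 2 * d) * \sum_(x in A) \sum_(y in B) (((x, y) \in Z)%:R : R)
    + \sum_(x in A) \sum_(y in B) d.
  rewrite mulr_sumr -big_split; apply: eq_bigr => x _.
  by rewrite mulr_sumr -big_split; apply: eq_bigr => y _; rewrite norm_balanced /=; ring.
have dAB : (#|Z :&: setX A B|%:R : R) = d * nAB.
  by apply/eqP; rewrite -subr_eq0 -discrepancy_full.
rewrite sum_rect_indicator sum_const_rect dAB.
have := mulr_ge0 (mulr_ge0 (ler0n _ #|A|) (ler0n _ #|B|)) (sqr_ge0 (d - 2^-1)); nra.
Qed.

Definition slice x' y' := \sum_(x in A) \sum_(y in B) f x y * f x y' * f x' y.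

Lemma box_sum_balanced :
  box_sum A B f = \sum_(x' in A) \sum_(y' in B) f x' y' * slice x' y'.
Proof.
rewrite /box_sum exchange_big /=; apply: eq_bigr => x' _.
under eq_bigr do rewrite exchange_big /=.
rewrite exchange_big /=; apply: eq_bigr => y' _.
rewrite /slice big_distrr /=; apply: eq_bigr => x _.
by rewrite big_distrr /=; apply: eq_bigr => y _; ring.
Qed.

Lemma slice_balanced x' y' : x' \in A -> y' \in B ->
  let S := [set x in A | (x, y') \in Z] in let T := [set y in B | (x', y) \in Z] in
  slice x' y' = D S T - d * D S B - d * (D A T - d * D A B).
Proof.
move=> x'A y'B S T.
have SA : S \subset A by apply/subsetP => x; rewrite inE => /andP[].
have TB : T \subset B by apply/subsetP => y; rewrite inE => /andP[].
have fS : {in A, forall x, f x y' = (x \in S)%:R - d} by move=> x xA; rewrite inE xA.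
have fT : {in B, forall y, f x' y = (y \in T)%:R - d} by move=> y yB; rewrite inE yB.
transitivity (\sum_(x in A) ((x \in S)%:R - d) *
                \sum_(y in B) ((y \in T)%:R - d) * f x y).
  apply: eq_bigr => x xA; rewrite mulr_sumr; apply: eq_bigr => y yB.
  by rewrite fS // fT //; ring.
under eq_bigr do rewrite sum_indicator_sub //.
by rewrite sum_indicator_sub // !sumrB -!mulr_sumr !sum_balanced.
Qed.

Lemma norm_slice_le x' y' : `|slice x' y'| <= nAB / 2.
Proof.
apply: le_trans sum_norm_balanced; rewrite /slice.
apply: le_trans (ler_norm_sum _ _ _) _; apply: ler_sum => x _.
apply: le_trans (ler_norm_sum _ _ _) _; apply: ler_sum => y _.
rewrite !normrM -[leRHS]mulr1 -mulrA ler_wpM2l //.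
by rewrite -[1]mulr1 ler_pM ?norm_balanced_le1.
Qed.

Lemma exists_large_discrepancy (u : R) : 0 < u -> u <= boxnorm f A B ->
  u ^+ 4 <= 2^-1 /\
  exists (S : {set X}) (T : {set Y}),
    [/\ S \subset A, T \subset B & u ^+ 4 * nAB / 3 <= `|D S T|].
Proof.
move=> u_gt0 u_le; have [A_gt0 B_gt0 box_ge] := box_sum_ge_boxnorm u_gt0 u_le.
have nAB_gt0 : 0 < nAB by rewrite mulr_gt0 ?ltr0n.
have [x' [y' [x'A y'B slice_ge]]] :
    exists x' y', [/\ x' \in A, y' \in B & u ^+ 4 * nAB <= `|slice x' y'|].
  apply: exists_large_term A_gt0 B_gt0 (@norm_balanced_le1) _.
  by rewrite -box_sum_balanced -mulrA -expr2.
split.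
  have := le_trans slice_ge (norm_slice_le x' y').
  by rewrite [nAB / 2]mulrC ler_pM2r.
move: (slice_balanced x'A y'B) => /=.
set S := [set x in A | _]; set T := [set y in B | _] => slice_eq.
have SA : S \subset A by apply/subsetP => x; rewrite inE => /andP[].
have TB : T \subset B by apply/subsetP => y; rewrite inE => /andP[].
have /andP[d_ge0 d_le1] := dens_ge0_le1.
have scale_le z : `|d * z| <= `|z| by rewrite normrM ger0_norm // ler_piMl.
have slice_le : `|slice x' y'| <= `|D S T| + `|D S B| + `|D A T|.
  rewrite slice_eq discrepancy_full mulr0 subr0.
  apply: le_trans (ler_normB _ _) _; rewrite lerD ?scale_le //.
  by apply: le_trans (ler_normB _ _) _; rewrite lerD ?scale_le.
have [ST|ST] := lerP (u ^+ 4 * nAB / 3) `|D S T|; first by exists S, T.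
have [SB|SB] := lerP (u ^+ 4 * nAB / 3) `|D S B|; first by exists S, B.
exists A, T; split => //; have := le_trans slice_ge slice_le.
by set U := u ^+ 4 * nAB in ST SB *; lra.
Qed.

End Balanced.

Lemma pow6_le_sqr_div3 (R : realType) (v : R) : 0 <= v -> v <= 2^-1 -> v ^+ 6 <= (v / 3) ^+ 2.
Proof.
move=> v_ge0 v_le; have -> : v ^+ 6 = v ^+ 2 * v ^+ 4 by rewrite -exprD.
have -> : (v / 3) ^+ 2 = v ^+ 2 * 9^-1 by field.
rewrite ler_wpM2l ?sqr_ge0 //; apply: le_trans (_ : 2^-1 ^+ 4 <= _).
  by rewrite ler_pXn2r // ?nnegrE ?invr_ge0.
by rewrite (_ : 2^-1 ^+ 4 = 16^-1 :> R) ?lef_pV2 ?posrE ?ler_nat //; field.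
Qed.

Section Increment.
Variables (R : realType) (X Y : finType) (Z : {set X * Y}).
Variables (PX : {set {set X}}) (PY : {set {set Y}}) (u : R).
Hypotheses (pX : partition PX [set: X]) (pY : partition PY [set: Y]) (u_gt0 : 0 < u).

(* The default [(set0, set0)] is only reached when no large rectangle exists, which
   [cut_rect_large] rules out on the cells of [Eset]. *)
Definition cut_rect (a : {set X}) (b : {set Y}) : {set X} * {set Y} :=
  odflt (set0, set0) [pick s : {set X} * {set Y} | [&& s.1 \subset a, s.2 \subset b &
    u ^+ 4 * (#|a|%:R * #|b|%:R) / 3 <= `|discrepancy R Z a b s.1 s.2|]].

Lemma cut_rect_subset a b : (cut_rect a b).1 \subset a /\ (cut_rect a b).2 \subset b.
Proof. by rewrite /cut_rect; case: pickP => [s /and3P[]|] //=; rewrite !sub0set. Qed.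

Lemma cut_rect_large a b : u <= boxnorm (balanced R Z a b) a b ->
  u ^+ 4 <= 2^-1 /\
  u ^+ 4 * (#|a|%:R * #|b|%:R) / 3 <= `|discrepancy R Z a b (cut_rect a b).1 (cut_rect a b).2|.
Proof.
move=> u_le; have [u4_le [S [T [Sa Tb large]]]] := exists_large_discrepancy u_gt0 u_le.
split=> //; rewrite /cut_rect; case: pickP => [s /and3P[] //|none].
by have := none (S, T); rewrite /= Sa Tb large.
Qed.

Definition refined_X := split_partition PX PY (fun a b => (cut_rect a b).1).
Definition refined_Y := split_partition PY PX (fun b a => (cut_rect a b).2).
Local Notation P := (prodpart PX PY).
Local Notation P' := (prodpart refined_X refined_Y).

Lemma partition_refined_X : partition refined_X [set: X].
Proof. exact: split_partitionP. Qed.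

Lemma partition_refined_Y : partition refined_Y [set: Y].
Proof. exact: split_partitionP. Qed.

Lemma refined_saturated : {in P, forall q, saturated P' q}.
Proof.
move=> _ /imset2P[a b aP bP ->].
by apply: saturated_setX; apply: saturated_split_block.
Qed.

Lemma energy_gain_cell a b : (a, b) \in Eset Z PX PY u ->
  u ^+ 24 * #|setX a b|%:R <=
  \sum_(z in setX a b) (condexp R Z P' z - condexp R Z P z) ^+ 2.
Proof.
rewrite !inE /= => /andP[/andP[aP bP] u_le]; have u_ge0 := ltW u_gt0.
have [u4_le large] := cut_rect_large u_le; have [Sa Tb] := cut_rect_subset a b.
set S := (cut_rect a b).1 in Sa large *; set T := (cut_rect a b).2 in Tb large *.
have satST : saturated P' (setX S T).
  by apply: saturated_setX; apply: saturated_split_piece.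
have := discrepancy_sqr_le R Z (partition_prodpart pX pY)
  (partition_prodpart partition_refined_X partition_refined_Y)
  (imset2_f _ aP bP) (setXS Sa Tb) satST.
rewrite (_ : _ - _ = discrepancy R Z a b S T); last first.
  by rewrite /discrepancy /dens !cardsX !natrM [_ * (_ / _)]mulrC.
rewrite cardsX natrM => disc_le.
set n : R := #|a|%:R * #|b|%:R in large disc_le *; set s := \sum_(z in _) _ in disc_le *.
have n_ge0 : 0 <= n by rewrite mulr_ge0 ?ler0n.
have s_ge0 : 0 <= s by apply: sumr_ge0 => z _; apply: sqr_ge0.
have [n0|n_gt0] := eqVneq n 0; first by rewrite n0 mulr0.
have {}n_gt0 : 0 < n by rewrite lt0r n_gt0.
have gain : (u ^+ 4 / 3) ^+ 2 * n <= s.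
  rewrite -(ler_pM2l n_gt0); apply: le_trans disc_le.
  rewrite (_ : n * _ = (u ^+ 4 * n / 3) ^+ 2); last by field.
  rewrite -[leRHS]real_normK ?num_real //.
  by rewrite ler_pXn2r // nnegrE divr_ge0 ?mulr_ge0 ?exprn_ge0.
apply: le_trans gain; rewrite ler_wpM2r //.
(* This is where the exponent C2 = 24 comes from. *)
have -> : u ^+ 24 = (u ^+ 4) ^+ 6 by rewrite -exprM.
by rewrite pow6_le_sqr_div3 ?exprn_ge0.
Qed.

Lemma refined_energy (tau : R) :
  tau <= #|\bigcup_(pq in Eset Z PX PY u) setX pq.1 pq.2|%:R / (#|X|%:R * #|Y|%:R) ->
  energy R Z P + tau * powR u 24 <= energy R Z P'.
Proof.
move=> tau_le; have u_ge0 := ltW u_gt0; rewrite powR_mulrn //.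
apply: (energy_increment (partition_prodpart pX pY)
  (partition_prodpart partition_refined_X partition_refined_Y) refined_saturated
  (F := [set setX pq.1 pq.2 | pq in Eset Z PX PY u])).
- apply/subsetP => _ /imsetP[[a b] + ->]; rewrite !inE /= => /andP[/andP[aP bP] _].
  exact: imset2_f.
- exact: exprn_ge0.
- by move=> _ /imsetP[[a b] abE ->]; apply: energy_gain_cell.
- by rewrite cover_imset card_prod natrM.
Qed.

End Increment.

Theorem proposition9p14 :
  exists C2 : Rdefinitions.R, 0 < C2 /\
  forall (u tau : Rdefinitions.R), 0 < u < 1 -> 0 < tau < 1 ->
  forall (X Y : finType) (Z : {set X * Y})
         (PX : {set {set X}}) (PY : {set {set Y}}),
  partition PX [set: X] -> partition PY [set: Y] ->
  tau <= #|\bigcup_(pq in Eset Z PX PY u) setX pq.1 pq.2|%:R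
           / (#|X|%:R * #|Y|%:R) ->
  exists (PX' : {set {set X}}) (PY' : {set {set Y}}),
    [/\ partition PX' [set: X], partition PY' [set: Y],
        (refines (prodpart PX' PY') (prodpart PX PY) /\
        energy Rdefinitions.R Z (prodpart PX PY) + tau * powR u C2
          <= energy Rdefinitions.R Z (prodpart PX' PY')),
        (multi PX' PX <= 2 ^ #|PY|)%N &
        (multi PY' PY <= 2 ^ #|PX|)%N].
Proof.
exists 24; split=> // u tau /andP[u_gt0 _] _ X Y Z PX PY pX pY tau_le.
exists (refined_X Z PX PY u), (refined_Y Z PX PY u); split.
- exact: partition_refined_X.
- exact: partition_refined_Y.
- split; last exact: refined_energy.
  apply: saturated_refines; last exact: refined_saturated.
  exact: partition_prodpart (partition_refined_X _ _ _ _) (partition_refined_Y _ _ _ _).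
- exact: multi_split_partition.
- exact: multi_split_partition.
Qed.
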